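(* Let $d\ge2$ be an integer, let $C>1$, let $K$ be a compact subset of $\mathbb{C}^*$ and let $L$ be a compact subset of the set of monic polynomials of degree $d$. There exists a constant $A>0$ such that, if $b\in\mathbb{C}$ satisfies $|b|>A$, then for every $N\ge1$ and all $\alpha_1,\ldots,\alpha_N\in K$ and $P_1,\ldots,P_N\in L$, the map $f:=f_N\circ\cdots\circ f_1$, where $f_i(z):=P_i(z)-b\alpha_i$, is hyperbolic with an expanding constant larger than $C$.
   Context: The set of monic degree $d$ polynomials is identified with $\mathbb{C}^d$ via coefficients. A polynomial $f$ is hyperbolic with expanding constant larger than $C$ if it is uniformly expanding on its Julia set with expansion factor larger than $C$ (i.e. $|f'|>C$ on the Julia set of $f$). *)

From HB Require Import structures.
From mathcomp Require Import all_boot all_order all_algebra.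
From mathcomp Require Import complex.
From mathcomp Require Import all_classical all_reals all_analysis.
Set Implicit Arguments. Unset Strict Implicit. Unset Printing Implicit Defensive.
Import Order.TTheory GRing.Theory Num.Theory.
Import numFieldTopology.Exports numFieldNormedType.Exports.
Local Open Scope classical_set_scope.
Local Open Scope ring_scope.
Local Open Scope complex_scope.

(* The complex numbers are modelled as R[i] for a real field R : realType,
   with the topology induced by the modulus (norm); the topology is carried
   by the alias R[i]^o (definitionally equal to R[i]). *)

(* Monic polynomial of degree d with lower coefficients c_0 .. c_{d-1}:
   X^d + sum_{i<d} c_i X^i.  This is the identification of monic degree-d
   polynomials with C^d via coefficients. *)
Definition monic_of (R : realType) (d : nat) (c : 'rV[R[i]^o]_d) : {poly R[i]} :=
  'X^d + \sum_(j < d) (c ord0 j)%:P * 'X^j.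

Fixpoint comp_seq (R : realType) (N : nat) (f : nat -> {poly R[i]}) : {poly R[i]} :=
  match N with
  | 0 => 'X
  | n.+1 => f n.+1 \Po comp_seq n f
  end.

Definition filled_julia (R : realType) (p : {poly R[i]}) : set R[i] :=
  [set z | exists M : R, forall n : nat, `|iter n (horner p) z| <= M%:C].

Definition julia (R : realType) (p : {poly R[i]}) : set R[i] :=
  @closure R[i]^o (filled_julia p) `&` @closure R[i]^o (~` filled_julia p).

Definition hyperbolic_gt (R : realType) (C : R) (p : {poly R[i]}) : Prop :=
  forall z, julia p z -> C%:C < `|p^`().[z]|.

From HB Require Import structures.
From mathcomp Require Import all_boot all_order all_algebra.
From mathcomp Require Import complex.
From mathcomp Require Import all_classical all_reals all_analysis.
From mathcomp Require Import lra zify.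
Import Order.TTheory GRing.Theory Num.Theory.
Import numFieldTopology.Exports numFieldNormedType.Exports.
Local Open Scope classical_set_scope.
Local Open Scope ring_scope.
Local Open Scope complex_scope.

Import Normc.
Set Implicit Arguments. Unset Strict Implicit.

(* Let c bound the coefficients on L and put rho := d c + C + 1.  Outside the
   disc |w| <= rho every step P_j has |P_j'| >= C + 1, while for |b| large every
   f_j maps that disc into the escape region
   E := {w : |w| >= 2 d c + 5, |w|^2 >= 4 |b| max_K |alpha|},
   which f_j maps into itself while increasing |w| by at least 1.  So a bounded
   orbit of f never meets E, all the intermediate points of the composition
   stay outside the disc, and the chain rule gives |f'| >= (C + 1)^N >= C + 1 on
   the filled Julia set, hence by continuity on its closure, which contains the
   Julia set. *)

Section RealModulus.
Variable R : realType.
Implicit Types (x y : R[i]) (a r : R).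

Lemma normcE x : `|x| = (normc x)%:C.
Proof. by case: x. Qed.

Lemma normc_ge0 x : 0 <= normc x.
Proof. by case: x => a b; rewrite sqrtr_ge0. Qed.

Lemma normc_eq0 x : (normc x == 0) = (x == 0).
Proof. by rewrite -(normr_eq0 x) normcE -[0 in RHS]/((0:R)%:C) (inj_eq (@complexI R)). Qed.

Lemma normcX x n : normc (x ^+ n) = normc x ^+ n.
Proof. by apply: complexI; rewrite rmorphXn /= -!normcE normrX. Qed.

Lemma normcX_le x r j k :
  1 <= r -> normc x <= r -> (j <= k)%N -> normc (x ^+ j) <= r ^+ k.
Proof.
move=> r1 xr jk; rewrite normcX (le_trans (lerXn2r _ _ _ xr)) ?nnegrE ?normc_ge0 //.
  exact: le_trans ler01 r1.
exact: ler_weXn2l.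
Qed.

Lemma normc_real a : normc a%:C = `|a|.
Proof. by rewrite /normc /= expr0n addr0 sqrtr_sqr. Qed.

Lemma lerB_normcD x y : normc x - normc y <= normc (x + y).
Proof. by rewrite lerBlDr -[x in normc x](addrK y) (le_trans (le_normcD _ _)) ?normcN. Qed.

Lemma normc_sum_le n (F : 'I_n -> R[i]) a :
  (forall j, normc (F j) <= a) -> normc (\sum_j F j) <= n%:R * a.
Proof.
move=> Fa; apply: (@le_trans _ _ (\sum_j normc (F j))).
  rewrite -lecR -normcE rmorph_sum /=.
  have -> : \sum_j (normc (F j))%:C = \sum_j `|F j| by apply: eq_bigr => j _; rewrite normcE.
  exact: ler_norm_sum.
by rewrite mulr_natl -[X in _ *+ X](card_ord n) -sumr_const ler_sum.
Qed.

Lemma normc_lipschitz x y : `|normc x - normc y| <= normc (x - y).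
Proof.
by rewrite -normc_real -lecR -!normcE rmorphB /= -!normcE ler_dist_dist.
Qed.

Lemma continuous_normc : continuous (@normc R : R[i]^o -> R).
Proof.
move=> x; apply: (proj2 (@cvgrPdist_lt _ _ _ (nbhs (x : R[i]^o)) _ _ _)) => e e0.
have : nbhs x (ball x (e%:C : R[i]^o)) by apply: nbhsx_ballx; rewrite ltcR.
apply: filterS => y; rewrite /ball /= normcE ltcR.
exact: le_lt_trans (normc_lipschitz _ _).
Qed.

Lemma continuous_horner_complex (p : {poly R[i]}) : continuous (horner p : R[i]^o -> R[i]^o).
Proof.
elim/poly_ind: p => [|p c IH] x.
  by rewrite (_ : horner 0 = cst 0); [exact: cst_continuous | apply/funext=> y; rewrite horner0].
rewrite (_ : horner _ = (fun y : R[i]^o => p.[y] * y + c)); last first.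
  by apply/funext => y; rewrite hornerMXaddC.
apply: (@cvgD R[i] R[i]^o _ (nbhs x) _ (fun y : R[i]^o => p.[y] * y) (fun _ => c)); last exact: cvg_cst.
by apply: (@cvgM R[i]^o _ (nbhs x) _ (fun y : R[i]^o => p.[y]) id); [exact: IH | exact: cvg_id].
Qed.

End RealModulus.

Section CompactBounds.
Variable R : realType.

Lemma compact_continuous_ub (T : topologicalType) (A : set T) (g : T -> R) :
  compact A -> continuous g -> exists2 M, 0 <= M & forall x, A x -> g x <= M.
Proof.
move=> cA cg; have [A0|A0] := pselect (A !=set0); last first.
  by exists 0 => // x Ax; case: A0; exists x.
have [x0 _ gx0] := compact_EVT_max A0 cA (continuous_subspaceT cg).
by exists (Num.max (g x0) 0) => [|x Ax]; rewrite le_max ?lexx ?orbT // gx0 ?inE.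
Qed.

Lemma compact_normc_lb (K : set R[i]^o) : compact K -> K `<=` [set z | z != 0] ->
  exists2 m, 0 < m & forall a, K a -> m <= normc a.
Proof.
move=> cK K0; have [K0'|K0'] := pselect (K !=set0); last first.
  by exists 1 => // a Ka; case: K0'; exists a.
have [a0 /set_mem Ka0 a0_min] :=
  compact_EVT_min K0' cK (continuous_subspaceT (@continuous_normc R)).
exists (normc a0) => [|a Ka]; last by rewrite a0_min ?inE.
by rewrite lt_def normc_ge0 normc_eq0 andbT K0.
Qed.

Lemma compact_coef_ub d (L : set 'rV[R[i]^o]_d) : compact L ->
  exists2 c, 0 <= c & forall Q, L Q -> forall j, normc (Q ord0 j) <= c.
Proof.
move=> cL.
have /boolp.choice[c c_ub] : forall j, exists M, forall Q, L Q -> normc (Q ord0 j) <= M.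
  move=> j; have [M _ M_ub] := compact_continuous_ub cL
    (fun Q => continuous_comp (@coord_continuous _ _ _ ord0 j Q) (@continuous_normc R _)).
  by exists M.
exists (\big[Num.max/0]_j c j) => [|Q LQ j]; first exact: bigmax_ge_id.
exact: le_trans (c_ub j Q LQ) (le_bigmax _ _ _).
Qed.

End CompactBounds.

Section MonicEstimates.
Variables (R : realType) (d : nat) (c : R) (cf : 'rV[R[i]^o]_d).
Hypotheses (d_gt1 : (1 < d)%N) (cf_ub : forall j, normc (cf ord0 j) <= c).
Implicit Types (w : R[i]) (r : R).

Lemma horner_monic w : (monic_of cf).[w] = w ^+ d + \sum_(j < d) cf ord0 j * w ^+ j.
Proof.
rewrite /monic_of hornerD hornerXn horner_sum; congr (_ + _).
by apply: eq_bigr => j _; rewrite hornerCM hornerXn.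
Qed.

Lemma horner_deriv_monic w : ((monic_of cf)^`()).[w] =
  w ^+ d.-1 *+ d + \sum_(j < d) cf ord0 j * (w ^+ j.-1 *+ j).
Proof.
rewrite /monic_of derivD derivXn raddf_sum hornerD hornerMn hornerXn horner_sum.
congr (_ + _); apply: eq_bigr => j _.
by rewrite mul_polyC /= derivZ derivXn hornerZ hornerMn hornerXn.
Qed.

Lemma normc_coef_sum_le w r : 1 <= r -> normc w <= r ->
  normc (\sum_(j < d) cf ord0 j * w ^+ j) <= d%:R * (c * r ^+ d.-1).
Proof.
move=> r1 wr; apply: normc_sum_le => j.
rewrite normcM ler_pM ?normc_ge0 ?normcX_le //.
by rewrite -ltnS (ltn_predK (ltn_ord j)).
Qed.

Lemma normc_coef_deriv_sum_le w r : 1 <= r -> normc w <= r ->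
  normc (\sum_(j < d) cf ord0 j * (w ^+ j.-1 *+ j)) <= d%:R * (c * (r ^+ d.-2 *+ d)).
Proof.
move=> r1 wr; apply: normc_sum_le => j.
rewrite normcM normcMn ler_pM ?normc_ge0 ?mulrn_wge0 ?normc_ge0 //.
have jd := ltn_ord j.
apply: (@le_trans _ _ (r ^+ d.-2 *+ j)).
  by rewrite ler_wMn2r // normcX_le //; lia.
by rewrite ler_wpMn2l ?exprn_ge0 ?(le_trans ler01) //; lia.
Qed.

Lemma normc_horner_monic_ge w : 1 <= normc w ->
  normc w ^+ d.-1 * (normc w - d%:R * c) <= normc (monic_of cf).[w].
Proof.
move=> w1; rewrite horner_monic (le_trans _ (lerB_normcD _ _)) // normcX.
have := normc_coef_sum_le w1 (lexx _).
have -> : normc w ^+ d = normc w ^+ d.-1 * normc w by rewrite -exprSr; congr (_ ^+ _); lia.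
move=> h; set x := normc w in h *; set S := normc _ in h *; lra.
Qed.

Lemma normc_horner_monic_le w r : 1 <= r -> normc w <= r ->
  normc (monic_of cf).[w] <= r ^+ d + d%:R * (c * r ^+ d.-1).
Proof.
move=> r1 wr; rewrite horner_monic (le_trans (le_normcD _ _)) // lerD //.
  exact: normcX_le.
exact: normc_coef_sum_le.
Qed.

Lemma normc_deriv_monic_ge w : 1 <= normc w ->
  d%:R * normc w ^+ d.-2 * (normc w - d%:R * c) <= normc ((monic_of cf)^`()).[w].
Proof.
move=> w1; rewrite horner_deriv_monic (le_trans _ (lerB_normcD _ _)) //.
have := normc_coef_deriv_sum_le w1 (lexx _).
rewrite normcMn normcX -mulr_natl.
have -> : normc w ^+ d.-1 = normc w ^+ d.-2 * normc w by rewrite -exprSr; congr (_ ^+ _); lia.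
move=> h; set x := normc w in h *; set S := normc _ in h *.
rewrite -mulr_natr in h; lra.
Qed.

End MonicEstimates.

Section StepMap.
Variables (R : realType) (d : nat) (C c : R) (cf : 'rV[R[i]^o]_d) (beta : R[i]).
Hypotheses (d_gt1 : (1 < d)%N) (C_gt1 : 1 < C) (c_ge0 : 0 <= c).
Hypothesis cf_ub : forall j, normc (cf ord0 j) <= c.

(* [lra] ignores section hypotheses: the proofs below copy into the context
   those they need. *)

Definition inner_radius : R := d%:R * c + C + 1.
Definition escape_radius : R := 2 * d%:R * c + 5.
Definition inner_bound : R := inner_radius ^+ d + d%:R * (c * inner_radius ^+ d.-1).

Let dc_ge0 : 0 <= d%:R * c. Proof. by rewrite mulr_ge0. Qed.

Lemma inner_bound_ge0 : 0 <= inner_bound.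
Proof.
have dc0 := dc_ge0; have C1 := C_gt1.
have rho0 : 0 <= inner_radius by rewrite /inner_radius; lra.
by rewrite /inner_bound addr_ge0 ?mulr_ge0 ?exprn_ge0.
Qed.

Lemma deriv_step_ge w : inner_radius < normc w ->
  C + 1 <= normc ((monic_of cf - beta%:P)^`()).[w].
Proof.
move=> w_rho; rewrite /inner_radius in w_rho.
have dc0 := dc_ge0; have C1 := C_gt1; have w1 : 1 <= normc w by lra.
rewrite derivB derivC subr0; apply: le_trans (normc_deriv_monic_ge d_gt1 cf_ub w1).
have pow_ge1 : 1 <= d%:R * normc w ^+ d.-2.
  by rewrite -[leLHS]mul1r ler_pM ?ler1n ?exprn_ege1 //; lia.
rewrite -[C + 1]mul1r ler_pM //; lra.
Qed.

Variables (lo hi : R).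

Definition escape_region : set R[i] :=
  [set w | escape_radius <= normc w /\ 4 * hi <= normc w ^+ 2].

Hypotheses (lo_large : 2 * inner_bound + 2 * escape_radius <= lo) (lo_sqr : 16 * hi <= lo ^+ 2).
Hypotheses (beta_lo : lo <= normc beta) (beta_hi : normc beta <= hi).

Lemma normc_step_ge_hi w : normc (monic_of cf).[w] - hi <= normc (monic_of cf - beta%:P).[w].
Proof.
rewrite hornerD hornerN hornerC; apply: le_trans (lerB_normcD _ _).
by rewrite normcN; exact: lerB (lexx _) beta_hi.
Qed.

Lemma normc_step_ge_lo w : lo - normc (monic_of cf).[w] <= normc (monic_of cf - beta%:P).[w].
Proof.
rewrite hornerD hornerN hornerC [X in _ <= normc X]addrC; apply: le_trans (lerB_normcD _ _).
by rewrite normcN; exact: lerB beta_lo (lexx _).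
Qed.

Lemma escape_region_step w : escape_region w ->
  escape_region (monic_of cf - beta%:P).[w] /\ normc w + 1 <= normc (monic_of cf - beta%:P).[w].
Proof.
move=> [wR w_hi]; rewrite /escape_region /escape_radius /= in wR *.
have dc0 := dc_ge0; have w1 : 1 <= normc w by lra.
have := normc_horner_monic_ge d_gt1 cf_ub w1; have := normc_step_ge_hi w.
set P := normc (monic_of cf).[w]; set y := normc _.[w].
set x := normc w in w1 wR w_hi * => yP Px.
have x_le_pow : x <= x ^+ d.-1 by rewrite -[leLHS]expr1 ler_weXn2l //; lia.
have P_ge : x ^+ 2 / 2 <= P.
  rewrite expr2 -mulrA; apply: le_trans Px; apply: ler_pM; lra.
have y_ge : x ^+ 2 / 4 <= y by lra.
have x5 : 0 <= (x - 5) * x by rewrite mulr_ge0; lra.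
by split; [split|]; nra.
Qed.

Lemma escape_region_disc w : normc w <= inner_radius ->
  escape_region (monic_of cf - beta%:P).[w].
Proof.
move=> w_rho; have dc0 := dc_ge0; have C1 := C_gt1; have lo1 := lo_large; have lo2 := lo_sqr.
have rho1 : 1 <= inner_radius by rewrite /inner_radius; lra.
have := normc_horner_monic_le cf_ub rho1 w_rho.
have := normc_step_ge_lo w.
rewrite /escape_region /= -/inner_bound.
set P := normc (monic_of cf).[w]; set y := normc _.[w] => yP PQ.
have Q_ge0 := inner_bound_ge0.
have R_ge0 : 0 <= escape_radius by rewrite /escape_radius; lra.
have y_ge : lo / 2 <= y by lra.
split; first lra.
have : (lo / 2) ^+ 2 <= y ^+ 2 by rewrite lerXn2r // nnegrE; lra.
lra.
Qed.

End StepMap.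

Section EscapeDynamics.
Variables (R : realType) (f : nat -> {poly R[i]}) (N : nat) (E : set R[i]) (rho D : R).
Hypotheses (N_gt0 : (0 < N)%N) (D_ge1 : 1 <= D).
Hypothesis f_escape : forall j w, (1 <= j <= N)%N -> E w ->
  E (f j).[w] /\ normc w + 1 <= normc (f j).[w].
Hypothesis f_disc : forall j w, (1 <= j <= N)%N -> normc w <= rho -> E (f j).[w].
Hypothesis f_deriv : forall j w, (1 <= j <= N)%N -> rho < normc w ->
  D <= normc ((f j)^`()).[w].

Local Notation F := (comp_seq N f).

Lemma horner_comp_seqS n z : (comp_seq n.+1 f).[z] = (f n.+1).[(comp_seq n f).[z]].
Proof. by rewrite /= horner_comp. Qed.

Lemma comp_seq_escape n k z : (n + k <= N)%N -> E (comp_seq n f).[z] ->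
  E (comp_seq (n + k) f).[z] /\
  normc (comp_seq n f).[z] + k%:R <= normc (comp_seq (n + k) f).[z].
Proof.
move=> + Ez; elim: k => [|k IH] nkN; first by rewrite addn0 addr0.
have /IH[Ek grow] : (n + k <= N)%N by lia.
have [|Ek1 grow1] := f_escape (j := (n + k).+1) _ Ek; first lia.
rewrite addnS horner_comp_seqS.
by split=> //; rewrite mulrS; lra.
Qed.

Lemma horner_comp_seq_escape w : E w -> E F.[w] /\ normc w + 1 <= normc F.[w].
Proof.
move=> Ew; have [] := @comp_seq_escape 0 N w (leqnn N); rewrite /= hornerX //.
move=> EF grow; split=> //.
have N1 : 1 <= N%:R :> R by rewrite ler1n.
lra.
Qed.

Lemma escape_iter w : E w -> forall k,
  E (iter k (horner F) w) /\ normc w + k%:R <= normc (iter k (horner F) w).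
Proof.
move=> Ew; elim=> [|k [Ek grow]]; first by rewrite addr0.
have [EFk growF] := horner_comp_seq_escape Ek.
by rewrite iterS; split=> //; rewrite mulrS; lra.
Qed.

Lemma escape_not_filled_julia w : E w -> ~ filled_julia F w.
Proof.
move=> Ew [M orbit_le]; set k := Num.bound `|M|.
have Mk : M < k%:R by rewrite (le_lt_trans (ler_norm M)) ?archi_boundP.
have [_ grow] := escape_iter Ew k; have := orbit_le k; rewrite normcE lecR.
by have := normc_ge0 w; lra.
Qed.

Lemma filled_julia_horner z : filled_julia F z -> filled_julia F F.[z].
Proof. by move=> [M orbit_le]; exists M => n; rewrite -iterSr. Qed.

Lemma filled_julia_orbit_gt z n : filled_julia F z -> (n < N)%N ->
  rho < normc (comp_seq n f).[z].
Proof.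
move=> Jz nN; rewrite ltNge; apply/negP => small.
have EF : E F.[z].
  rewrite -(subnKC nN); apply: (comp_seq_escape _ _).1; first by rewrite subnKC.
  by rewrite horner_comp_seqS; apply: f_disc small; lia.
exact: escape_not_filled_julia EF (filled_julia_horner Jz).
Qed.

Lemma filled_julia_deriv_ge z : filled_julia F z -> D <= normc (F^`()).[z].
Proof.
move=> Jz; suff: forall n, (n <= N)%N -> D ^+ n <= normc ((comp_seq n f)^`()).[z].
  by move/(_ N (leqnn N)); apply: le_trans; rewrite -[leLHS]expr1 ler_weXn2l.
elim=> [|n IH] nN; first by rewrite /= derivX hornerC normc1.
rewrite /= deriv_comp hornerM horner_comp normcM exprS.
rewrite ler_pM ?exprn_ge0 ?(le_trans ler01) ?IH 1?ltnW //.
by apply: f_deriv; [lia | exact: filled_julia_orbit_gt].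
Qed.

End EscapeDynamics.

Lemma hyperbolic_gt_filled_julia (R : realType) (C D : R) (p : {poly R[i]}) : C < D ->
  (forall z, filled_julia p z -> D <= normc (p^`()).[z]) -> hyperbolic_gt C p.
Proof.
move=> CD Dp z [Jz _]; rewrite normcE ltcR; apply: lt_le_trans CD _.
set S := [set w : R[i]^o | D <= normc (p^`()).[w]].
have closedS : closed S.
  apply: (@preimage_closed _ _ (fun w : R[i]^o => normc (p^`()).[w]) [set x | D <= x]).
    move=> w _; apply: (continuous_comp (f := fun w : R[i]^o => (p^`().[w] : R[i]^o))
                                       (g := @normc R : R[i]^o -> R)).
      exact: continuous_horner_complex.
    exact: continuous_normc.
  exact: closed_ge.
suff : S z by [].
by rewrite (closure_id S).1 //; exact: (@closureS R[i]^o (filled_julia p) S Dp z Jz).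
Qed.

Lemma hyperbolic_gt_comp_seq (R : realType) (d : nat) (C c lo hi : R) N
    (cf : nat -> 'rV[R[i]^o]_d) (beta : nat -> R[i]) :
  (1 < d)%N -> 1 < C -> 0 <= c ->
  2 * inner_bound d C c + 2 * escape_radius d c <= lo -> 16 * hi <= lo ^+ 2 -> (0 < N)%N ->
  (forall j, (1 <= j <= N)%N ->
     (forall i, normc (cf j ord0 i) <= c) /\ lo <= normc (beta j) <= hi) ->
  hyperbolic_gt C (comp_seq N (fun j => monic_of (cf j) - (beta j)%:P)).
Proof.
move=> d1 C1 c0 lo_large lo_sqr N0 step_bounds.
apply: (@hyperbolic_gt_filled_julia _ _ (C + 1)); first lra.
apply: (filled_julia_deriv_ge (E := escape_region d c hi) (rho := inner_radius d C c)) => //;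
  [lra | move=> j w /step_bounds[cf_ub /andP[beta_lo beta_hi]]..].
- exact: (escape_region_step d1 C1 c0 cf_ub lo_large lo_sqr beta_lo beta_hi (w := w)).
- exact: (escape_region_disc C1 c0 cf_ub lo_large lo_sqr beta_lo (w := w)).
- exact: (deriv_step_ge _ d1 C1 c0 cf_ub (w := w)).
Qed.

Theorem lemma2p2 (R : realType) (d : nat) (C : R)
    (K : set R[i]^o) (L : set 'rV[R[i]^o]_d) :
  (2 <= d)%N -> 1 < C ->
  compact K -> K `<=` [set z | z != 0] -> compact L ->
  exists A : R, 0 < A /\
    forall b : R[i], A%:C < `|b| ->
    forall (N : nat) (alpha : nat -> R[i]) (P : nat -> 'rV[R[i]^o]_d),
      (1 <= N)%N ->
      (forall j, (1 <= j <= N)%N -> K (alpha j) /\ L (P j)) ->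
      hyperbolic_gt C
        (comp_seq N (fun j => monic_of (P j) - (b * alpha j)%:P)).
Proof.
move=> d2 C1 cK K0 cL.
have [c c0 L_ub] := compact_coef_ub cL.
have [m m0 K_lb] := compact_normc_lb cK K0.
have [M M0 K_ub] := compact_continuous_ub cK (@continuous_normc R).
set S := 2 * inner_bound d C c + 2 * escape_radius d c.
have S0 : 0 <= S.
  by rewrite /S /escape_radius addr_ge0 ?mulr_ge0 ?inner_bound_ge0 ?addr_ge0 ?mulr_ge0.
have SA : 0 <= S / m by rewrite divr_ge0 // ltW.
have MA : 0 <= 16 * M / m ^+ 2 by rewrite divr_ge0 ?mulr_ge0 ?exprn_ge0 // ltW.
exists (S / m + 16 * M / m ^+ 2 + 1); split; first lra.
move=> b; rewrite normcE ltcR => bA N alpha P N1 KL.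
have b0 : 0 <= normc b := normc_ge0 b.
apply: (hyperbolic_gt_comp_seq (c := c) (lo := normc b * m) (hi := normc b * M)) => //.
- by rewrite -/S -ler_pdivrMr //; lra.
- have : 16 * M <= normc b * m ^+ 2 by rewrite -ler_pdivrMr ?exprn_gt0 //; lra.
  by move=> /(ler_wpM2l b0); rewrite exprMn; lra.
- move=> j /KL[/[dup] Kalpha /K_lb alpha_lb /L_ub P_ub]; split=> //.
  by rewrite normcM !ler_wpM2l ?K_ub.
Qed.
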